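(* Let $C \subset \mathbb{R}^n$ be convex and closed with nonempty interior, and let $h\colon C\to\mathbb{R}$ be Legendre on $C$, continuous on $C$, and satisfy condition (B): for every sequence $(x_k)_{k\in\mathbb{N}} \subset \mathrm{int}\, C$ and every $y \in C$, if $x_k \to y$ then $D_h(y,x_k) \to 0$. Let $x \in \mathrm{bd}\, C$ and $y \in C$ be such that $\frac{x+y}{2} \in \mathrm{int}\, C$. Then $D_h\big(y, (1-\lambda)x + \lambda y\big) \to +\infty$ as $\lambda \to 0^+$.
   Context: A convex function $h \colon C \to \mathbb{R}$ on a convex set $C\subset\mathbb{R}^n$ with nonempty interior is called Legendre if (1) $h$ is continuously differentiable on $\mathrm{int}\, C$ and $\|\nabla h(x)\| \to +\infty$ whenever $x \in \mathrm{int}\, C$ approaches a point of the boundary of $C$; and (2) $h$ is strictly convex on $\mathrm{int}\, C$. The Bregman divergence is $D_h(y,x) = h(y) - h(x) - \langle \nabla h(x), y - x\rangle$ for $y \in C$, $x \in \mathrm{int}\, C$. $\mathrm{bd}\, C$ denotes the boundary of $C$. *)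

From HB Require Import structures.
From mathcomp Require Import all_boot all_order all_algebra.
From mathcomp Require Import all_classical all_reals all_analysis.
Set Implicit Arguments. Unset Strict Implicit. Unset Printing Implicit Defensive.
Import Order.TTheory GRing.Theory Num.Theory.
Import numFieldNormedType.Exports.
Local Open Scope classical_set_scope.
Local Open Scope ring_scope.

Section Defs.
Context {R : realType} {n : nat}.
Implicit Types (C : set 'rV[R]_n) (h : 'rV[R]_n -> R).

Definition convex_setR C := forall x y t, C x -> C y -> 0 <= t <= 1 ->
  C ((1 - t) *: x + t *: y).

Definition convex_on C h := forall x y t, C x -> C y -> 0 <= t <= 1 ->
  h ((1 - t) *: x + t *: y) <= (1 - t) * h x + t * h y.

Definition strictly_convex_on (A : set 'rV[R]_n) h := forall x y t,
  A x -> A y -> x != y -> 0 < t < 1 ->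
  h ((1 - t) *: x + t *: y) < (1 - t) * h x + t * h y.

Definition bd C := closure C `\` interior C.

Definition inner (u v : 'rV[R]_n) : R := \sum_(i < n) u 0 i * v 0 i.
Definition enorm (u : 'rV[R]_n) : R := Num.sqrt (inner u u).

Definition grad h (x : 'rV[R]_n) : 'rV[R]_n :=
  \row_(i < n) 'D_(delta_mx 0 i) h x.

Definition bregman h (y x : 'rV[R]_n) : R :=
  h y - h x - inner (grad h x) (y - x).

Definition legendre C h :=
  convex_on C h /\
  (forall x, interior C x -> differentiable h x) /\
  (forall x, interior C x -> {for x, continuous (grad h)}) /\
  (* ||grad h x|| -> +oo as x in int C approaches a boundary point *)
  (forall z, bd C z -> forall M : R,
     \forall x \near z, interior C x -> M < enorm (grad h x)) /\
  strictly_convex_on (interior C) h.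

Definition condB C h := forall (u : nat -> 'rV[R]_n) (y : 'rV[R]_n),
  (forall k, interior C (u k)) -> C y -> u @ \oo --> y ->
  (fun k => bregman h y (u k)) @ \oo --> 0.

End Defs.

From HB Require Import structures.
From mathcomp Require Import all_boot all_order all_algebra.
From mathcomp Require Import all_classical all_reals all_analysis.
From mathcomp Require Import ring lra.
Import Order.TTheory GRing.Theory Num.Theory.
Import numFieldNormedType.Exports.
Local Open Scope classical_set_scope.
Local Open Scope ring_scope.

(* Write z_l = (1 - l) x + l y and m = (x + y) / 2.  Some ball B(m, e) lies in
   C, and m lies on the segment from z_l to y.  Testing the gradient
   inequality of h at z_l against the 2n points m +- r e_i (r < e) gives
     n (h z_l + <grad h z_l, m - z_l>) + r |grad h z_l| <= const,
   so as |grad h z_l| -> +oo (z_l -> x in bd C) while h z_l -> h x, the slope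
   <grad h z_l, y - z_l> tends to -oo, and so D_h(y, z_l) tends to +oo. *)

Section Inner.
Context {R : realType} {n : nat}.
Implicit Types (u v w : 'rV[R]_n).

Lemma inner_addr u v w : inner u (v + w) = inner u v + inner u w.
Proof. by rewrite /inner -big_split; apply: eq_bigr => i _; rewrite mxE mulrDr. Qed.

Lemma inner_scaler u v a : inner u (a *: v) = a * inner u v.
Proof. by rewrite /inner mulr_sumr; apply: eq_bigr => i _; rewrite mxE mulrCA. Qed.

Lemma inner_delta u i : inner u (delta_mx 0 i) = u 0 i.
Proof.
rewrite /inner (bigD1 i) //= mxE !eqxx mulr1 big1 ?addr0 // => j ji.
by rewrite mxE eqxx /= (negbTE ji) mulr0.
Qed.

Lemma norm_delta_le1 (i : 'I_n) : `|delta_mx 0 i : 'rV[R]_n| <= 1.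
Proof.
rewrite [`|_|]mx_normrE; elim/big_ind: _ => //.
- by move=> a b ha hb; rewrite ge_max ha hb.
- by move=> [a b] _ /=; rewrite mxE; case: (_ && _); rewrite ?normr1 ?normr0.
Qed.

Lemma enorm_le_sum_norm u : enorm u <= \sum_(i < n) `|u 0 i|.
Proof.
have [sum_ge0 inner_le] : 0 <= \sum_(i < n) `|u 0 i| /\
    inner u u <= (\sum_(i < n) `|u 0 i|) ^+ 2.
  rewrite /inner; elim/big_rec2: _ => [|i a b _ [b0 ab]]; first by rewrite expr0n.
  split; first by rewrite addr_ge0.
  have : u 0 i * u 0 i = `|u 0 i| ^+ 2 by rewrite real_normK ?num_real // expr2.
  have : 0 <= `|u 0 i| by [].
  nra.
by rewrite /enorm -(ger0_norm sum_ge0) -sqrtr_sqr ler_sqrt // sqr_ge0.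
Qed.

Lemma derive_inner_grad (h : 'rV[R]_n -> R) z v :
  differentiable h z -> 'D_v h z = inner (grad h z) v.
Proof.
move=> dh; rewrite deriveE // {1}(row_sum_delta v) linear_sum /inner.
by apply: eq_bigr => i _; rewrite linearZ /= mxE deriveE // mulrC.
Qed.

End Inner.

Lemma convex_interior_segment {R : realType} {n : nat} (C : set 'rV[R]_n) x m t :
  convex_setR C -> C x -> interior C m -> 0 < t <= 1 ->
  interior C ((1 - t) *: x + t *: m).
Proof.
move=> cvx Cx /nbhs_ballP[e e0 ballC] /andP[t0 t1].
apply/nbhs_ballP; exists (t * e); first exact: mulr_gt0.
move=> w; rewrite -ball_normE /= => hw.
pose u := t^-1 *: (w - (1 - t) *: x).
have -> : w = (1 - t) *: x + t *: u.
  by rewrite /u scalerA mulfV ?gt_eqF // scale1r addrC subrK.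
apply: cvx => //; last by rewrite t1 ltW.
apply: ballC; rewrite -ball_normE /=.
have -> : m - u = t^-1 *: ((1 - t) *: x + t *: m - w).
  rewrite /u !scalerBr !scalerDr !scalerA mulVf ?gt_eqF // scale1r.
  by rewrite opprB addrA [m + _]addrC.
by rewrite normrZ ger0_norm ?invr_ge0 ?ltW // ltr_pdivrMl.
Qed.

Lemma convex_interior_half_segment {R : realType} {n : nat} (C : set 'rV[R]_n) x y l :
  convex_setR C -> C x -> interior C (2^-1 *: (x + y)) -> 0 < l <= 2^-1 ->
  interior C ((1 - l) *: x + l *: y).
Proof.
move=> C_convex Cx m_int /andP[l_gt0 l_le].
have -> : (1 - l) *: x + l *: y = (1 - 2 * l) *: x + (2 * l) *: (2^-1 *: (x + y)).
  by apply/rowP => j; rewrite !mxE; lra.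
by apply: convex_interior_segment => //; apply/andP; split; lra.
Qed.

Lemma midpoint_in_segment {R : realType} {n : nat} (x y : 'rV[R]_n) l : l < 2^-1 ->
  exists2 s, 0 < s <= 1 & 2^-1 *: (x + y) = (1 - s) *: ((1 - l) *: x + l *: y) + s *: y.
Proof.
move=> l_lt; exists ((2^-1 - l) / (1 - l)).
  by apply/andP; split; [apply: divr_gt0 | rewrite ler_pdivrMr ?mul1r]; lra.
by apply/rowP => j; rewrite !mxE; field; lra.
Qed.

Lemma segment_cvg_at_right {R : realType} {V : normedModType R} (x y : V) :
  (1 - l) *: x + l *: y @[l --> 0^'+] --> x.
Proof.
apply: cvg_at_right_filter.
rewrite -[in X in _ --> X](addr0 x) -[in X in _ --> X + _](scale1r x).
rewrite -[in X in _ --> X + _](subr0 1) -[in X in _ --> _ + X](scale0r y).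
apply: cvgD; apply: cvgZ; try exact: cvg_cst; try exact: cvg_id.
by apply: cvgB; [exact: cvg_cst | exact: cvg_id].
Qed.

Lemma continuous_within_near_gt {T : topologicalType} {R : realType} {C : set T}
    {h : T -> R} {x : T} {c : R} :
  {within C, continuous h} -> C x -> c < h x -> \forall w \near x, C w -> c < h w.
Proof.
move=> h_cont Cx c_lt; have h_to_hx := (subspace_continuousP C h).1 h_cont x Cx.
by have := cvgr_gt _ h_to_hx _ c_lt; rewrite near_withinE; apply; exact: within_filter.
Qed.

Definition cross_bound {R : realType} {n : nat} (h : 'rV[R]_n -> R) m r :=
  \sum_(i < n) (`|h (m + r *: delta_mx 0 i)| + `|h (m - r *: delta_mx 0 i)|).

Section ConvexGradient.
Context {R : realType} {n : nat} {C : set 'rV[R]_n} {h : 'rV[R]_n -> R}.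
Hypothesis h_convex : convex_on C h.

Lemma convex_on_derive_le z w : C z -> C w -> derivable h z (w - z) ->
  h z + 'D_(w - z) h z <= h w.
Proof.
move=> Cz Cw /cvg_ex[l dh].
have -> : 'D_(w - z) h z = l by exact: cvg_lim.
rewrite addrC -lerBrDr.
apply: (cvgr_to_le (cvg_dnbhs_at_right dh)).
near=> t.
have t0 : 0 < t by near: t; exact: nbhs_right_gt.
have t1 : t <= 1 by near: t; apply: nbhs_right_ltW; exact: ltr01.
have -> : (h \o shift z) (t *: (w - z)) = h ((1 - t) *: z + t *: w).
  by rewrite /= /shift; congr h; apply/rowP => j; rewrite !mxE; lra.
have := h_convex z w t Cz Cw; rewrite ltW //= t1 => /(_ isT) hcvx.
change (t^-1 * (h ((1 - t) *: z + t *: w) - h z) <= h w - h z).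
rewrite ler_pdivrMl //; nra.
Unshelve. all: by end_near.
Qed.

Lemma convex_on_grad_le z w : C z -> C w -> differentiable h z ->
  h z + inner (grad h z) (w - z) <= h w.
Proof.
move=> Cz Cw dh; rewrite -derive_inner_grad //.
exact/convex_on_derive_le/diff_derivable.
Qed.

Context {m : 'rV[R]_n} {e r : R}.
Hypotheses (ball_sub : ball m e `<=` C) (r_gt0 : 0 < r) (r_lt : r < e).

Lemma convex_on_grad_axis_le z i : C z -> differentiable h z ->
  h z + inner (grad h z) (m - z) + r * `|grad h z 0 i|
    <= `|h (m + r *: delta_mx 0 i)| + `|h (m - r *: delta_mx 0 i)|.
Proof.
move=> Cz dh; set g := grad h z.
have tangent_le c : `|c| = r ->
    h z + inner g (m - z) + c * g 0 i <= h (m + c *: delta_mx 0 i).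
  move=> cr; have Cw : C (m + c *: delta_mx 0 i).
    apply: ball_sub; rewrite -ball_normE /= opprD addrA subrr add0r normrN normrZ cr.
    by rewrite (le_lt_trans _ r_lt) // ger_pMr // norm_delta_le1.
  have := convex_on_grad_le z _ Cz Cw dh.
  by rewrite -/g addrAC (inner_addr g (m - z)) inner_scaler inner_delta addrA.
have := normr_ge0 (h (m + r *: delta_mx 0 i)).
have := normr_ge0 (h (m - r *: delta_mx 0 i)).
have [g0|g0] := leP 0 (g 0 i).
- have := tangent_le r (gtr0_norm r_gt0).
  have := ler_norm (h (m + r *: delta_mx 0 i)).
  rewrite (ger0_norm g0); lra.
- have := tangent_le (- r); rewrite normrN scaleNr => /(_ (gtr0_norm r_gt0)).
  have := ler_norm (h (m - r *: delta_mx 0 i)).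
  rewrite (ltr0_norm g0); lra.
Qed.

Lemma convex_on_grad_cross_le z : C z -> differentiable h z ->
  n%:R * (h z + inner (grad h z) (m - z)) + r * enorm (grad h z)
    <= cross_bound h m r.
Proof.
move=> Cz dh; set g := grad h z.
have sum_le : \sum_(i < n) (h z + inner g (m - z) + r * `|g 0 i|) <= cross_bound h m r.
  by apply: ler_sum => i _; exact: convex_on_grad_axis_le.
apply: le_trans sum_le; rewrite big_split /= sumr_const card_ord -mulr_sumr mulr_natl.
by rewrite lerD2l ler_pM2l // enorm_le_sum_norm.
Qed.

Lemma bregman_gt_of_grad_large y z s K : C z -> differentiable h z ->
  0 < s <= 1 -> m = (1 - s) *: z + s *: y ->
  cross_bound h m r + n%:R * K < r * enorm (grad h z) -> 0 <= h z + K ->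
  h y + K < bregman h y z.
Proof.
move=> Cz dh /andP[s_gt0 s_le1] mE large hzK; set g := grad h z.
have slope_neg : h z + inner g (m - z) + K < 0.
  rewrite ltNge; apply/negP => slope_ge0.
  have := mulr_ge0 (ler0n _ n) slope_ge0.
  have := convex_on_grad_cross_le z Cz dh; rewrite -/g; lra.
have mz : m - z = s *: (y - z) by rewrite mE; apply/rowP => j; rewrite !mxE; lra.
rewrite mz inner_scaler in slope_neg; rewrite /bregman -/g; nra.
Qed.

End ConvexGradient.

Theorem lemma1 (R : realType) (n : nat) (C : set 'rV[R]_n) (h : 'rV[R]_n -> R)
  (x y : 'rV[R]_n) :
  convex_setR C -> closed C -> interior C !=set0 ->
  legendre C h -> {within C, continuous h} -> condB C h ->
  bd C x -> C y -> interior C ((2^-1) *: (x + y)) ->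
  (fun l : R => bregman h y ((1 - l) *: x + l *: y)) @ 0^'+ --> +oo.
Proof.
move=> C_convex C_closed _ [h_convex [h_diff [_ [grad_blowup _]]]] h_cont _.
move=> bd_x Cy; set m := 2^-1 *: (x + y) => m_int.
have Cx : C x by case: bd_x => cl_x _; rewrite ((closure_id C).1 C_closed).
have /nbhs_ballP[e /= e_gt0 ball_sub] := m_int.
have [r_gt0 r_lt] : 0 < e / 2 /\ e / 2 < e by split; lra.
pose z l := (1 - l) *: x + l *: y.
have z_to_x : z l @[l --> 0^'+] --> x := segment_cvg_at_right x y.
have h_near_x : \forall w \near x, C w -> h x - 1 < h w.
  by apply: continuous_within_near_gt; rewrite ?gtrBl.
(* K makes h y + K >= B, and h (z l) + K >= 0 as soon as h (z l) > h x - 1. *)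
apply/cvgryPge => B; pose K := `|B - h y| + `|h x| + 1.
have grad_large := grad_blowup x bd_x ((cross_bound h m (e / 2) + n%:R * K) / (e / 2)).
near=> l.
have l_gt0 : 0 < l by near: l; exact: nbhs_right_gt.
have l_lt : l < 2^-1 by near: l; apply: nbhs_right_lt; rewrite invr_gt0.
have z_int : interior C (z l).
  by apply: convex_interior_half_segment => //; rewrite l_gt0 ltW.
have Cz := interior_subset z_int.
have hz_gt : C (z l) -> h x - 1 < h (z l) by near: l; exact: z_to_x _ h_near_x.
have grad_gt : interior C (z l) -> (cross_bound h m (e / 2) + n%:R * K) / (e / 2)
    < enorm (grad h (z l)) by near: l; exact: z_to_x _ grad_large.
rewrite ltr_pdivrMr // (mulrC _ (e / 2)) in grad_gt.
have hzK : 0 <= h (z l) + K.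
  have := hz_gt Cz; have := lerNnormlW (lexx `|h x|).
  have := normr_ge0 (B - h y); rewrite /K; lra.
have [s s_range mE] := midpoint_in_segment x y l l_lt.
have := bregman_gt_of_grad_large h_convex ball_sub r_gt0 r_lt y (z l) s K
  Cz (h_diff _ z_int) s_range mE (grad_gt z_int) hzK.
have := normr_ge0 (h x); have := ler_norm (B - h y); rewrite -/(z l) /K; lra.
Unshelve. all: by end_near.
Qed.
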